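(* For all $Y,Z\in\mathbb{N}^\mathbb{N}$, the following are equivalent: (1) $Y=\mathcal{J}^\omega(Z)$; (2) for every $n$ there exists a finite string $\sigma_n\subset Z$ with $|\sigma_n|>n$ such that $Y\restriction n=J^\omega(\sigma_n)$.
   Context: Strings are coded by natural numbers via a fixed computable coding with $\sigma\subsetneq\tau$ implying code$(\sigma)<$ code$(\tau)$. For $\sigma$ finite or infinite, $\{e\}^\sigma_t(n)\downarrow$ means the $e$-th machine on input $n$ with oracle $\sigma$ halts in fewer than $\min(|\sigma|,t)$ steps. For $Z\in\mathbb{N}^\mathbb{N}$: $t_{-1}=1$, $t_n=\max\{t_{n-1}+1,\mu t(\{n\}^Z_t(n)\downarrow)\}$ ($t_n=t_{n-1}+1$ if no such $t$), $\mathcal{J}(Z)(n)=Z\restriction t_n$, and $\mathcal{J}^\omega(Z)(n)=\mathcal{J}^{n+1}(Z)(0)$. For finite $\sigma$: $t_{-1}=1$, $t_n=\max\{t_{n-1}+1,\mu t(\{n\}^{\sigma\restriction t}(n)\downarrow)\}$ ($t_n=t_{n-1}+1$ if no such $t$), $J(\sigma)=\langle\sigma\restriction t_0,\dots,\sigma\restriction t_{k-1}\rangle$ with $k$ least such that $t_k>|\sigma|$; $J^m$ is the $m$-fold iterate (entries of strings being codes of strings); and $J^\omega(\sigma)=\langle J(\sigma)(0),J^2(\sigma)(0),\dots,J^{n-1}(\sigma)(0)\rangle$ where $n$ is least with $J^n(\sigma)=\emptyset$. *)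

From Stdlib Require Import ClassicalEpsilon.
From mathcomp Require Import all_boot.
Set Implicit Arguments. Unset Strict Implicit. Unset Printing Implicit Defensive.

(* Machine model:
   [halt e n tau] = the e-th oracle machine on input n, run with the finite
   oracle string tau, halts in fewer than [size tau] steps (and so only reads
   tau).  Thus {e}^sigma_t(n)|  (sigma finite or infinite) is
   [halt e n (sigma |` min(|sigma|,t))].
   Strings are coded by [code : seq nat -> nat]. *)

Definition mu (P : pred nat) : option nat :=
  match excluded_middle_informative (exists t, P t) with
  | left H => Some (ex_minn H)
  | right _ => None
  end.

Definition restr (Z : nat -> nat) (t : nat) : seq nat := mkseq Z t.

Section Jump.
Variable code : seq nat -> nat.
Variable halt : nat -> nat -> seq nat -> bool.

(* tinf Z n = t_{n-1}; so t_n = tinf Z n.+1, t_{-1} = 1 *)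
Fixpoint tinf (Z : nat -> nat) (n : nat) : nat :=
  match n with
  | 0 => 1
  | m.+1 =>
      match mu (fun t => halt m m (restr Z t)) with
      | Some s => maxn (tinf Z m).+1 s
      | None => (tinf Z m).+1
      end
  end.

Definition calJ (Z : nat -> nat) : nat -> nat :=
  fun n => code (restr Z (tinf Z n.+1)).

Definition calJomega (Z : nat -> nat) : nat -> nat :=
  fun n => iter n.+1 calJ Z 0.

(* tfin s n = t_{n-1} *)
Fixpoint tfin (s : seq nat) (n : nat) : nat :=
  match n with
  | 0 => 1
  | m.+1 =>
      match mu (fun t => halt m m (take t s)) with
      | Some u => maxn (tfin s m).+1 u
      | None => (tfin s m).+1
      end
  end.

Lemma tfin_ge s n : n < tfin s n.
Proof.
elim: n => [//|n IH] /=.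
case: (mu _) => [u|]; last by [].
by apply: leq_trans (leq_maxl _ _).
Qed.

Lemma kJ_ex s : exists k, size s < tfin s k.+1.
Proof. by exists (size s); apply: leq_trans (tfin_ge s _). Qed.

Definition kJ (s : seq nat) : nat := ex_minn (kJ_ex s).

Definition Jfin (s : seq nat) : seq nat :=
  [seq code (take (tfin s i.+1) s) | i <- iota 0 (kJ s)].

Lemma size_Jfin s : size (Jfin s) <= (size s).-1.
Proof.
rewrite size_map size_iota /kJ; case: ex_minnP => k _ Hmin.
apply: Hmin; case: s => [|x s] /=; first exact: ltnW (tfin_ge [::] 1).
exact: tfin_ge.
Qed.

Lemma nJ_ex s : exists n, iter n Jfin s == [::].
Proof.
exists (size s).
suff H : forall m, size (iter m Jfin s) <= size s - m.
  by have := H (size s); rewrite subnn leqn0 size_eq0.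
elim=> [|m IH] /=; first by rewrite subn0.
apply: leq_trans (size_Jfin _) _.
by rewrite subnS -!subn1 leq_sub2r.
Qed.

Definition nJ (s : seq nat) : nat := ex_minn (nJ_ex s).

Definition Jomega (s : seq nat) : seq nat :=
  [seq head 0 (iter i Jfin s) | i <- iota 1 (nJ s).-1].

End Jump.

(* Direction (1) => (2): take [sigma_n = Z |` L_n(Z)], where [L_0(X) = 1] and
   [L_(n+1)(X) = t_(k-1)(X)] with [k = L_n(J(X))].  The finite jump reproduces
   the infinite one on the nose, [J(X |` t_(k-1)(X)) = J(X) |` k], so iterating
   gives [J^omega(sigma_n) = J^omega(Z) |` n] exactly.

   Direction (2) => (1): two approximations share [Y], hence share the heads of
   their iterated jumps, and since each entry of [J(sigma)] codes a prefix of
   [sigma] of length [t_i > i], agreement of [J(sigma)] on [a + 1] entries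
   forces agreement of [sigma] on [a + 2] entries.  Hence, for each level [m],
   the [m]-th iterated jumps of the approximations stabilise on every prefix,
   including the lengths [t_i] they use; once those lengths lie inside the
   stabilised prefix of [J^m(Z)], the finite and the infinite jump coincide. *)

From Stdlib Require Import ClassicalEpsilon.
From mathcomp Require Import all_boot.

Set Implicit Arguments.
Unset Strict Implicit.
Unset Printing Implicit Defensive.

Lemma mu_Some (P : pred nat) u : mu P = Some u -> P u /\ forall t, P t -> u <= t.
Proof. by rewrite /mu; case: excluded_middle_informative => // H [<-]; case: ex_minnP. Qed.

Lemma mu_None (P : pred nat) : mu P = None -> forall t, ~~ P t.
Proof.
rewrite /mu; case: excluded_middle_informative => // nP _ t.
by apply/negP => Pt; apply: nP; exists t.
Qed.

Lemma eq_mu_upto (P Q : pred nat) B : (forall t, t <= B -> P t = Q t) ->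
  (forall u, mu P = Some u -> u <= B) -> (forall u, mu Q = Some u -> u <= B) ->
  mu P = mu Q.
Proof.
move=> PQ boundP boundQ.
case EP: (mu P) => [u|]; case EQ: (mu Q) => [v|] //.
- have [uB vB] := (boundP _ EP, boundQ _ EQ).
  have [[Pu minu] [Qv minv]] := (mu_Some EP, mu_Some EQ).
  rewrite PQ // in Pu; rewrite -PQ // in Qv.
  by congr Some; apply/eqP; rewrite eqn_leq minu ?minv.
- by have [Pu _] := mu_Some EP; have := mu_None EQ u; rewrite -PQ ?Pu ?boundP.
- by have [Qv _] := mu_Some EQ; have := mu_None EP v; rewrite PQ ?Qv ?boundQ.
Qed.

Lemma mu_take_le (Q : pred (seq nat)) s u :
  mu (fun t => Q (take t s)) = Some u -> u <= size s.
Proof.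
move=> /mu_Some [Qu minu]; apply: leq_trans (geq_minr u (size s)).
by apply: minu; rewrite take_min take_size.
Qed.

Lemma take_mkseq (T : Type) (f : nat -> T) a b :
  take a (mkseq f b) = mkseq f (minn a b).
Proof. by rewrite /mkseq -map_take take_iota. Qed.

Lemma take_restr X a b : a <= b -> take a (restr X b) = restr X a.
Proof. by move=> ab; rewrite take_mkseq (minn_idPl ab). Qed.

Section Jump.

Variables (code : seq nat -> nat) (halt : nat -> nat -> seq nat -> bool).

Local Notation tinf := (tinf halt).
Local Notation tfin := (tfin halt).
Local Notation kJ := (kJ halt).
Local Notation calJ := (calJ code halt).
Local Notation calJomega := (calJomega code halt).
Local Notation Jfin := (Jfin code halt).
Local Notation nJ := (nJ code halt).
Local Notation Jomega := (Jomega code halt).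

Lemma tinf_ltS X n : tinf X n < tinf X n.+1.
Proof. by rewrite /=; case: (mu _) => // u; rewrite leq_max leqnn. Qed.

Lemma tfin_ltS s n : tfin s n < tfin s n.+1.
Proof. by rewrite /=; case: (mu _) => // u; rewrite leq_max leqnn. Qed.

Lemma tinf_gt X n : n < tinf X n.
Proof. by elim: n => // n IH; apply: leq_ltn_trans IH (tinf_ltS X n). Qed.

Lemma leq_tinf X : {homo tinf X : m n / m <= n}.
Proof. by apply: homo_leq leq_trans _ => // n; apply: ltnW (tinf_ltS X n). Qed.

Lemma leq_tfin s : {homo tfin s : m n / m <= n}.
Proof. by apply: homo_leq leq_trans _ => // n; apply: ltnW (tfin_ltS s n). Qed.

Lemma tfin_le_size s i : i < kJ s -> tfin s i.+1 <= size s.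
Proof.
rewrite /kJ; case: ex_minnP => k _ mink ik.
by rewrite leqNgt; apply/negP => /mink; rewrite leqNgt ik.
Qed.

Lemma JfinE s : Jfin s = mkseq (fun i => code (take (tfin s i.+1) s)) (kJ s).
Proof. by []. Qed.

Lemma size_Jfin_kJ s : size (Jfin s) = kJ s.
Proof. exact: size_mkseq. Qed.

Lemma tfin_tinfS s X P j : take P s = restr X P -> tinf X j.+1 <= P ->
  (forall u, mu (fun t => halt j j (take t s)) = Some u -> u <= P) ->
  tfin s j = tinf X j -> tfin s j.+1 = tinf X j.+1.
Proof.
move=> sX tP boundP IH /=.
rewrite IH (@eq_mu_upto _ (fun t => halt j j (restr X t)) P) //.
- by move=> t tP'; rewrite -(take_takel _ tP') sX take_restr.
- by move=> v Ev; apply: leq_trans tP; rewrite /= Ev leq_maxr.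
Qed.

Lemma tfin_restr_tinf X k j : j <= k -> tfin (restr X (tinf X k)) j = tinf X j.
Proof.
elim: j => // j IH jk; apply: (tfin_tinfS (P := tinf X k)) (IH (ltnW jk)).
- by rewrite take_restr.
- exact: leq_tinf jk.
- by move=> u /mu_take_le; rewrite size_mkseq.
Qed.

Lemma tfin_eq_tinf s X P j : take P s = restr X P -> tinf X j <= P -> tfin s j <= P ->
  forall i, i <= j -> tfin s i = tinf X i.
Proof.
move=> sX tP fP; elim=> // i IH ij; apply: (tfin_tinfS sX) (IH (ltnW ij)).
- exact: leq_trans (leq_tinf X ij) tP.
- move=> u Eu; apply: leq_trans (leq_trans (leq_tfin s ij) fP).
  by rewrite /= Eu leq_maxr.
Qed.

Lemma kJ_restr_tinf X k : kJ (restr X (tinf X k)) = k.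
Proof.
rewrite /kJ; case: ex_minnP => i; rewrite size_mkseq => ki mini.
apply/eqP; rewrite eqn_leq mini /=; last first.
  by rewrite -{1}(tfin_restr_tinf X (leqnn k)) tfin_ltS.
by rewrite leqNgt; apply/negP => ik; move: ki; rewrite tfin_restr_tinf // ltnNge leq_tinf.
Qed.

Lemma Jfin_restr_tinf X k : Jfin (restr X (tinf X k)) = restr (calJ X) k.
Proof.
rewrite JfinE kJ_restr_tinf; apply/eq_in_map => i; rewrite mem_iota => /andP[_ ik].
by rewrite tfin_restr_tinf // take_restr // leq_tinf.
Qed.

Lemma Jfin_nil : Jfin [::] = [::].
Proof. by apply/eqP; rewrite -size_eq0 -leqn0 (size_Jfin code halt [::]). Qed.

Lemma nJ_eq s n : iter n Jfin s != [::] -> iter n.+1 Jfin s = [::] -> nJ s = n.+1.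
Proof.
move=> ne0 eq0; rewrite /nJ; case: ex_minnP => k /eqP ek mink.
apply/eqP; rewrite eqn_leq mink ?eq0 //= ltnNge; apply/negP => kn.
by move: ne0; rewrite -(subnK kn) iterD ek iter_fix ?Jfin_nil.
Qed.

Lemma iter_Jfin_neq0 s m : m < nJ s -> iter m Jfin s != [::].
Proof.
by rewrite /nJ; case: ex_minnP => k _ mink mk; apply/negP => /mink; rewrite leqNgt mk.
Qed.

Lemma size_Jomega s : size (Jomega s) = (nJ s).-1.
Proof. by rewrite size_map size_iota. Qed.

Lemma nth_Jomega s k : k < (nJ s).-1 ->
  nth 0 (Jomega s) k = head 0 (iter k.+1 Jfin s).
Proof. by move=> kn; rewrite (nth_map 0) ?size_iota // nth_iota. Qed.

Fixpoint approx_len n X : nat :=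
  if n is n'.+1 then tinf X (approx_len n' (calJ X)) else 1.

Lemma approx_len_gt n X : n < approx_len n X.
Proof. by elim: n X => // n IH X; apply: leq_ltn_trans (IH _) (tinf_gt _ _). Qed.

Lemma iter_Jfin_restr_len n m X : m <= n ->
  iter m Jfin (restr X (approx_len n X)) =
  restr (iter m calJ X) (approx_len (n - m) (iter m calJ X)).
Proof.
elim: m n X => [|m IH] n X mn; first by rewrite subn0.
by case: n mn => // n mn; rewrite !iterSr /= Jfin_restr_tinf IH.
Qed.

Lemma Jomega_restr_len n X : Jomega (restr X (approx_len n X)) = restr (calJomega X) n.
Proof.
have nJs : nJ (restr X (approx_len n X)) = n.+1.
  apply: nJ_eq; first by rewrite iter_Jfin_restr_len // subnn.
  by rewrite iterS iter_Jfin_restr_len // subnn (Jfin_restr_tinf _ 0).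
apply: (@eq_from_nth _ 0) => [|k]; first by rewrite size_Jomega nJs size_mkseq.
rewrite size_Jomega nJs => kn.
rewrite nth_Jomega ?nJs // iter_Jfin_restr_len // nth_mkseq //.
by rewrite -nth0 nth_mkseq // (leq_ltn_trans _ (approx_len_gt _ _)).
Qed.

Section Approximation.

Hypothesis code_inj : injective code.
Variables Y Z : nat -> nat.

Definition approx n s := s = restr Z (size s) /\ n < size s /\ restr Y n = Jomega s.

Hypothesis approx_ex : forall n, exists s, approx n s.

Lemma approx_iter_Jfin n s k : approx n s -> k < n -> exists w, iter k.+1 Jfin s = Y k :: w.
Proof.
move=> [_ [_ EY]] kn.
have nJs : nJ s = n.+1.
  by move: (congr1 size EY) kn; rewrite size_mkseq size_Jomega => ->; case: (nJ s).
have := iter_Jfin_neq0 (_ : k.+1 < nJ s); rewrite nJs => /(_ kn).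
have := nth_Jomega (_ : k < (nJ s).-1); rewrite nJs -EY nth_mkseq // => /(_ kn).
by case: (iter k.+1 Jfin s) => // x w /= -> _; exists w.
Qed.

Lemma Jfin_nth_inj s s' i : i < kJ s -> i < kJ s' ->
  nth 0 (Jfin s) i = nth 0 (Jfin s') i ->
  tfin s i.+1 = tfin s' i.+1 /\ take (tfin s i.+1) s = take (tfin s i.+1) s'.
Proof.
move=> ik ik'; rewrite !JfinE !nth_mkseq // => /code_inj E.
have Et : tfin s i.+1 = tfin s' i.+1.
  by move: (congr1 size E); rewrite !size_takel ?tfin_le_size.
by split; rewrite // E Et.
Qed.

Lemma Jfin_prefix_inj s s' a : a < size (Jfin s) -> a < size (Jfin s') ->
  take a.+1 (Jfin s) = take a.+1 (Jfin s') ->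
  a.+1 < size s /\ a.+1 < size s' /\ take a.+2 s = take a.+2 s'.
Proof.
rewrite !size_Jfin_kJ => ak ak' E.
have [Et Es] : tfin s a.+1 = tfin s' a.+1 /\ take (tfin s a.+1) s = take (tfin s a.+1) s'.
  by apply: Jfin_nth_inj => //; rewrite -(nth_take 0 (ltnSn a)) E nth_take.
have [lt lt'] := (tfin_ge halt s a.+1, tfin_ge halt s' a.+1).
split; first exact: leq_trans lt (tfin_le_size ak).
split; first exact: leq_trans lt' (tfin_le_size ak').
by rewrite -(take_takel _ lt) Es take_takel.
Qed.

Lemma approx_iter_Jfin_agree n n' s s' l d : approx n s -> approx n' s' ->
  l + d < n -> l + d < n' ->
  [/\ d < size (iter l.+1 Jfin s), d < size (iter l.+1 Jfin s') &
      take d.+1 (iter l.+1 Jfin s) = take d.+1 (iter l.+1 Jfin s')].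
Proof.
move=> V V'; elim: d l => [|d IH] l ln ln'.
  rewrite addn0 in ln ln'.
  have [w ->] := approx_iter_Jfin V ln; have [w' ->] := approx_iter_Jfin V' ln'.
  by rewrite !take_cons !take0.
have [ln1 ln1'] : l.+1 + d < n /\ l.+1 + d < n' by rewrite !addSnnS.
have [ds ds' E] := IH _ ln1 ln1'.
by move: ds ds' E; rewrite !(iterS l.+1) => ds ds' /(Jfin_prefix_inj ds ds') [? [? ?]].
Qed.

Lemma approx_tfin_stable m p : exists B N, forall n s, N <= n -> approx n s ->
  p < kJ (iter m Jfin s) /\ tfin (iter m Jfin s) p.+1 = B.
Proof.
have [s0 V0] := approx_ex (m + p).+1.
exists (tfin (iter m Jfin s0) p.+1), (m + p).+1 => n s mpn V.
have [ps ps0 E] := approx_iter_Jfin_agree V V0 mpn (ltnSn _).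
move: ps ps0 E; rewrite !iterS !size_Jfin_kJ => ps ps0 E; split => //.
by apply: (proj1 (Jfin_nth_inj ps ps0 _)); rewrite -(nth_take 0 (ltnSn p)) E nth_take.
Qed.

Lemma approx_iter_Jfin_conv m p : exists N, forall n s, N <= n -> approx n s ->
  p <= size (iter m Jfin s) /\ take p (iter m Jfin s) = restr (iter m calJ Z) p.
Proof.
elim: m p => [|m IH] p.
  exists p => n s pn [sZ [ns _]] /=; have ps : p <= size s := leq_trans pn (ltnW ns).
  by rewrite {2}sZ take_restr.
case: p => [|p]; first by exists 0 => n s _ _; rewrite take0.
set X := iter m calJ Z.
have [B [N1 stable]] := approx_tfin_stable m p.
have [N2 conv] := IH (maxn B (tinf X p.+1)).
exists (maxn N1 N2) => n s; rewrite geq_max => /andP[N1n N2n] V.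
have [pk tB] := stable n s N1n V; have [_ sX] := conv n s N2n V.
have tP : tfin (iter m Jfin s) p.+1 <= maxn B (tinf X p.+1) by rewrite tB leq_maxl.
have tX := tfin_eq_tinf sX (leq_maxr _ _) tP.
rewrite !iterS -/X size_Jfin_kJ; split => //.
rewrite JfinE take_mkseq (minn_idPl pk); apply/eq_in_map => i.
rewrite mem_iota => /andP[_ ip]; rewrite tX // /calJ.
have tiP : tinf X i.+1 <= maxn B (tinf X p.+1) by rewrite leq_max leq_tinf ?orbT.
by rewrite -(take_takel _ tiP) sX take_restr.
Qed.

End Approximation.

End Jump.

Theorem lemma5p11
  (code : seq nat -> nat)
  (halt : nat -> nat -> seq nat -> bool)
  (code_inj : injective code)
  (code_mono : forall s u : seq nat, u != [::] -> code s < code (s ++ u))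
  (halt_mono : forall (e n : nat) (s u : seq nat), halt e n s -> halt e n (s ++ u))
  (Y Z : nat -> nat) :
  (forall n, Y n = calJomega code halt Z n) <->
  (forall n : nat, exists sigma : seq nat,
      sigma = restr Z (size sigma) /\ n < size sigma /\
      restr Y n = Jomega code halt sigma).
Proof.
split=> [YJ n | approx_ex j].
  exists (restr Z (approx_len code halt n Z)); rewrite size_mkseq.
  by rewrite Jomega_restr_len /restr (eq_mkseq YJ) approx_len_gt.
have [N conv] := approx_iter_Jfin_conv code_inj approx_ex j.+1 1.
have [s V] := approx_ex (maxn N j.+1).
have [_ E] := conv _ s (leq_maxl _ _) V.
have [w Ew] := approx_iter_Jfin V (leq_maxr N j.+1).
by move: E; rewrite Ew => -[->].
Qed.
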